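(* Let $\hat{a}\in\mathbb{C}$, $\hat{a}\neq 0$, and $\hat{d}\in\mathbb{Z}$, $\hat{d}\geq 0$. Let $F_0,F_1$ be causal filters, not both zero, with $\gcd(F_0,F_1)=z^{-d_F}$ where $0\leq d_F\leq\hat{d}$, and let $M\in\mathbb{Z}$ satisfy $0\leq M\leq \hat{d}-d_F$. Suppose $(E_0,E_1)$ is a causal complement to $(F_0,F_1)$ for $\hat{a}z^{-\hat{d}}$, i.e. $F_0E_1-F_1E_0=\hat{a}z^{-\hat{d}}$. Define $\widetilde{F}_j(z)=z^{d_F}F_j(z)$, $j=0,1$ (which are causal), and let $\ell\in\{0,1\}$ be an index for which $\widetilde{F}_\ell$ is left-justified. Then there exists a unique causal filter $S(z)$ such that the pair $(R_0,R_1)=(E_0-S\widetilde{F}_0,\;E_1-S\widetilde{F}_1)$ is a causal complement to $(F_0,F_1)$ for $\hat{a}z^{-\hat{d}}$ that is degree-reducing modulo $M$ in $F_\ell$; moreover this $(R_0,R_1)$ is the unique causal complement to $(F_0,F_1)$ for $\hat{a}z^{-\hat{d}}$ that is degree-reducing modulo $M$ in $F_\ell$.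
   Context: A causal filter is a polynomial in $z^{-1}$ with complex coefficients; $\deg$ denotes degree in $z^{-1}$ ($\deg 0=-\infty$); gcd and divisibility are in $\mathbb{C}[z^{-1}]$ (up to nonzero constants). A causal filter $F$ is left-justified if $z^{-1}\nmid F$, i.e. its constant term $f(0)$ is nonzero. An ordered pair $(R_0,R_1)$ of causal filters is a causal complement to $(F_0,F_1)$ for inhomogeneity $\hat{a}z^{-\hat{d}}$ if $F_0R_1-F_1R_0=\hat{a}z^{-\hat{d}}$. It is degree-reducing modulo $M$ in $F_\ell$ ($\ell\in\{0,1\}$) if $z^{-M}$ divides both $R_0$ and $R_1$ and $\deg(R_\ell)<\deg(F_\ell)-\deg\gcd(F_0,F_1)+M$. *)

From HB Require Import structures.
From mathcomp Require Import all_boot all_order all_algebra.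
From mathcomp Require Import complex.
From mathcomp Require Import Rstruct.
Set Implicit Arguments. Unset Strict Implicit. Unset Printing Implicit Defensive.
Import Order.TTheory GRing.Theory Num.Theory.
Local Open Scope ring_scope.

Notation C := (Rdefinitions.R)[i].

(* A causal filter is a polynomial in z^{-1}; we represent it as an element
   of {poly C}, the indeterminate 'X standing for z^{-1}. *)
Notation causal_filter := {poly C}.

Definition left_justified (F : causal_filter) : Prop := ~~ ('X %| F).

Definition causal_complement (F0 F1 R0 R1 : causal_filter) (a : C) (d : nat) : Prop :=
  F0 * R1 - F1 * R0 = a%:P * 'X^d.

Definition sel (l : bool) (F0 F1 : causal_filter) := if l then F1 else F0.

(* (R0,R1) is degree-reducing modulo M in F_l:
   z^{-M} | R0, z^{-M} | R1, and deg R_l < deg F_l - deg gcd(F0,F1) + M,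
   where deg 0 = -oo (so the inequality holds when R_l = 0 and fails when
   R_l <> 0 and F_l = 0). *)
Definition degree_reducing (F0 F1 R0 R1 : causal_filter) (M : nat) (l : bool) : Prop :=
  ('X^M %| R0) /\ ('X^M %| R1) /\
  (sel l R0 R1 = 0 \/
   (sel l F0 F1 != 0 /\
    ((size (sel l R0 R1))%:Z - 1 <
     ((size (sel l F0 F1))%:Z - 1) - ((size (gcdp F0 F1))%:Z - 1) + M%:Z)%R)).

From HB Require Import structures.
From mathcomp Require Import all_boot all_order all_algebra.
From mathcomp Require Import complex Rstruct.
From mathcomp Require Import zify ring.
Set Implicit Arguments.
Unset Strict Implicit.
Unset Printing Implicit Defensive.

Import GRing.Theory.
Local Open Scope ring_scope.

(* Dividing out z^{-dF}, the complements of (F0, F1) are exactly E - S Ft with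
   Ft0, Ft1 coprime, so R_l ranges over the coset E_l + (Ft_l).  As z^{-1} does
   not divide Ft_l, z^{-M} and Ft_l are coprime, and by the Chinese remainder
   theorem this coset contains exactly one multiple of z^{-M} of degree below
   deg (z^{-M} Ft_l).  The complement relation, read modulo z^{-M}, then forces
   z^{-M} to divide the other component R_{1-l} as well. *)

Section PolyFacts.
Variable K : fieldType.
Implicit Types P Q E S x y : {poly K}.

Lemma polyXn_neq0 n : ('X^n : {poly K}) != 0.
Proof. by rewrite -size_poly_eq0 size_polyXn. Qed.

Lemma ndvdp_neq0 (D : {poly K}) P : ~~ (D %| P) -> P != 0.
Proof. by apply: contraNneq => ->; rewrite dvdp0. Qed.

Lemma coprimep_Xn M P : ~~ ('X %| P) -> coprimep 'X^M P.
Proof.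
move=> XnP; apply: coprimep_expl; rewrite coprimep_sym.
by have := coprimep_XsubC P 0; rewrite -dvdp_XsubCl polyC0 subr0 => ->.
Qed.

Lemma gcdp_mulXn_coprimep n P Q :
  gcdp ('X^n * P) ('X^n * Q) %= 'X^n -> coprimep P Q.
Proof.
move=> hg; have := eqp_trans (etrans (eqp_sym _ _) (gcdp_mul2l 'X^n P Q)) hg.
rewrite -{2}['X^n]mulr1 eqp_mul2l ?polyXn_neq0 // => /eqp_size.
by rewrite /coprimep size_poly1 => ->.
Qed.

(* With u P + v Q = 1, T = u D0 + v D1 works; no nonvanishing of P or Q is needed. *)
Lemma coprimep_cross_mul P Q (D0 D1 : {poly K}) :
  coprimep P Q -> P * D1 = Q * D0 -> exists T, D0 = T * P /\ D1 = T * Q.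
Proof.
case/Bezout_eq1_coprimepP=> -[u v] /= uv eD; exists (u * D0 + v * D1).
split; [rewrite -[LHS]mul1r -uv | rewrite -[LHS]mul1r -uv].
- by rewrite mulrDl -[v * Q * D0]mulrA -eD; ring.
- by rewrite mulrDl -[u * P * D1]mulrA eD; ring.
Qed.

Lemma dvdp_cross_coprimep M P Q x y : coprimep 'X^M P ->
  'X^M %| P * y - Q * x -> 'X^M %| x -> 'X^M %| y.
Proof.
move=> cXP dXr dXx; rewrite -(Gauss_dvdpr _ cXP).
by rewrite -[P * y](subrK (Q * x)) dvdp_add //; apply: dvdp_mull.
Qed.

Definition reduced_mod (M : nat) P (R : {poly K}) :=
  ('X^M %| R) && (size R < size P + M)%N.

Lemma reduced_mod_sub_mul_exists M P E :
  ~~ ('X %| P) -> exists S, reduced_mod M P (E - S * P).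
Proof.
move=> XnP; have P0 := ndvdp_neq0 XnP.
have [[u v] /= uv] := Bezout_eq1_coprimepP _ _ (coprimep_Xn M XnP).
pose N := 'X^M * P; pose Q := (E * u * 'X^M) %/ N.
have N0 : N != 0 by rewrite mulf_neq0 ?polyXn_neq0.
have modE : (E * u * 'X^M) %% N = E * u * 'X^M - Q * N.
  by rewrite {2}(divp_eq (E * u * 'X^M) N) addrAC subrr add0r.
exists (E * v + Q * 'X^M).
have -> : E - (E * v + Q * 'X^M) * P = (E * u * 'X^M) %% N.
  by rewrite modE /N -{1}[E]mulr1 -uv; ring.
apply/andP; split.
  by rewrite modE; apply: dvdp_sub; [exact: dvdp_mull | exact/dvdp_mull/dvdp_mulr].
have := ltn_modpN0 (E * u * 'X^M) N0.
by rewrite size_mul ?polyXn_neq0 // size_polyXn addSn addnC.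
Qed.

Lemma reduced_mod_sub_mul_inj M P E S S' : ~~ ('X %| P) ->
  reduced_mod M P (E - S * P) -> reduced_mod M P (E - S' * P) -> S' = S.
Proof.
move=> XnP /andP[dS sS] /andP[dS' sS'].
have P0 := ndvdp_neq0 XnP.
have eD : (S - S') * P = (E - S' * P) - (E - S * P) by ring.
apply/eqP; rewrite eq_sym -subr_eq0; apply/negPn/negP => D0.
have dXD : 'X^M %| S - S'.
  by rewrite -(Gauss_dvdpl _ (coprimep_Xn M XnP)) eD; apply: dvdp_sub.
have := dvdp_leq D0 dXD; rewrite size_polyXn.
have : (size ((S - S') * P)%R < size P + M)%N.
  by rewrite eD (leq_ltn_trans (size_polyD _ _)) // size_polyN gtn_max sS sS'.
rewrite size_mul //; have := size_poly_gt0 P; rewrite P0.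
by move: (size (S - S')) (size P) => s p; lia.
Qed.

End PolyFacts.

Lemma sel_sub_mul l (E0 E1 Ft0 Ft1 S : causal_filter) :
  sel l (E0 - S * Ft0) (E1 - S * Ft1) = sel l E0 E1 - S * sel l Ft0 Ft1.
Proof. by case: l. Qed.

Lemma causal_complement_sub_mul (G Ft0 Ft1 E0 E1 S : causal_filter) a d :
  causal_complement (G * Ft0) (G * Ft1) E0 E1 a d ->
  causal_complement (G * Ft0) (G * Ft1) (E0 - S * Ft0) (E1 - S * Ft1) a d.
Proof. by rewrite /causal_complement => <-; ring. Qed.

Lemma causal_complement_param n (Ft0 Ft1 E0 E1 R0 R1 : causal_filter) a d :
  coprimep Ft0 Ft1 ->
  causal_complement ('X^n * Ft0) ('X^n * Ft1) E0 E1 a d ->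
  causal_complement ('X^n * Ft0) ('X^n * Ft1) R0 R1 a d ->
  exists S, R0 = E0 - S * Ft0 /\ R1 = E1 - S * Ft1.
Proof.
rewrite /causal_complement => cop cE cR.
have eD : Ft0 * (R1 - E1) = Ft1 * (R0 - E0).
  have : 'X^n * (Ft0 * (R1 - E1) - Ft1 * (R0 - E0)) = 0.
    by rewrite -[0](subrr (a%:P * 'X^d)) -{1}cR -cE; ring.
  by move/eqP; rewrite mulf_eq0 (negPf (polyXn_neq0 _ n)) subr_eq0 => /eqP.
have [T [eT0 eT1]] := coprimep_cross_mul cop eD.
by exists (- T); split; [rewrite mulNr opprK -eT0 | rewrite mulNr opprK -eT1];
  ring.
Qed.

Lemma causal_complement_dvdp n M (Ft0 Ft1 R0 R1 : causal_filter) a d :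
  (n + M <= d)%N ->
  causal_complement ('X^n * Ft0) ('X^n * Ft1) R0 R1 a d ->
  'X^M %| Ft0 * R1 - Ft1 * R0.
Proof.
rewrite /causal_complement => hd cR.
rewrite -(dvdp_mul2l _ _ (polyXn_neq0 _ n)) -exprD.
have -> : 'X^n * (Ft0 * R1 - Ft1 * R0) = a%:P * 'X^d by rewrite -cR; ring.
by rewrite dvdp_mull // dvdp_exp2l.
Qed.

Lemma degree_reducing_mulXnE n M l (Ft0 Ft1 R0 R1 : causal_filter) :
  sel l Ft0 Ft1 != 0 -> size (gcdp ('X^n * Ft0) ('X^n * Ft1)) = n.+1 ->
  degree_reducing ('X^n * Ft0) ('X^n * Ft1) R0 R1 M l <->
  [/\ 'X^M %| R0, 'X^M %| R1 &
      (size (sel l R0 R1) < size (sel l Ft0 Ft1) + M)%N].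
Proof.
move=> P0 sg; rewrite /degree_reducing sg.
have -> : sel l ('X^n * Ft0) ('X^n * Ft1) = 'X^n * sel l Ft0 Ft1 by case: (l).
have XP0 : 'X^n * sel l Ft0 Ft1 != 0 by rewrite mulf_neq0 ?polyXn_neq0.
rewrite size_mul ?polyXn_neq0 // size_polyXn XP0.
have := size_poly_gt0 (sel l Ft0 Ft1); rewrite P0.
move: (sel l R0 R1) (size (sel l Ft0 Ft1)) => R p p0; split.
- by case=> dX0 [dX1 [->|[_ sR]]]; split=> //; rewrite ?size_poly0; lia.
- by case=> dX0 dX1 sR; do 2!split=> //; right; split=> //; lia.
Qed.

Lemma causal_complement_degree_reducingE n M l (Ft0 Ft1 R0 R1 : causal_filter) a d :
  left_justified (sel l Ft0 Ft1) ->
  size (gcdp ('X^n * Ft0) ('X^n * Ft1)) = n.+1 -> (n + M <= d)%N ->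
  causal_complement ('X^n * Ft0) ('X^n * Ft1) R0 R1 a d ->
  degree_reducing ('X^n * Ft0) ('X^n * Ft1) R0 R1 M l <->
  reduced_mod M (sel l Ft0 Ft1) (sel l R0 R1).
Proof.
move=> XnP sg hd cR.
have P0 := ndvdp_neq0 XnP.
rewrite degree_reducing_mulXnE // /reduced_mod.
have dX := causal_complement_dvdp hd cR; have cXP := coprimep_Xn M XnP.
case: l {XnP P0} cXP => /= cXP.
  split=> [[_ dX1 sR] | /andP[dX1 sR]]; first by rewrite dX1 sR.
  split=> //; apply: (dvdp_cross_coprimep (Q := Ft0) cXP _ dX1).
  by rewrite -opprB dvdpNr.
split=> [[dX0 _ sR] | /andP[dX0 sR]]; first by rewrite dX0 sR.
by split=> //; apply: (dvdp_cross_coprimep cXP dX dX0).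
Qed.

Theorem theorem2p6 (a : C) (d : nat) (F0 F1 E0 E1 : causal_filter) (dF M : nat)
    (Ft0 Ft1 : causal_filter) (l : bool) :
  a != 0 ->
  ~ (F0 = 0 /\ F1 = 0) ->
  gcdp F0 F1 %= 'X^dF ->
  (dF <= d)%N ->
  (M <= d - dF)%N ->
  causal_complement F0 F1 E0 E1 a d ->
  (* Ft_j = z^{dF} F_j, i.e. F_j = z^{-dF} Ft_j *)
  F0 = 'X^dF * Ft0 -> F1 = 'X^dF * Ft1 ->
  left_justified (sel l Ft0 Ft1) ->
  exists S : causal_filter,
    [/\ causal_complement F0 F1 (E0 - S * Ft0) (E1 - S * Ft1) a d /\
        degree_reducing F0 F1 (E0 - S * Ft0) (E1 - S * Ft1) M l,
      (forall S' : causal_filter,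
          causal_complement F0 F1 (E0 - S' * Ft0) (E1 - S' * Ft1) a d /\
          degree_reducing F0 F1 (E0 - S' * Ft0) (E1 - S' * Ft1) M l ->
          S' = S) &
      (forall R0 R1 : causal_filter,
          causal_complement F0 F1 R0 R1 a d /\ degree_reducing F0 F1 R0 R1 M l ->
          R0 = E0 - S * Ft0 /\ R1 = E1 - S * Ft1)].
Proof.
move=> _ _ hg hdF hM cE eF0 eF1 XnP; subst F0 F1.
have cop := gcdp_mulXn_coprimep hg.
have sg : size (gcdp ('X^dF * Ft0) ('X^dF * Ft1)) = dF.+1.
  by rewrite (eqp_size hg) size_polyXn.
have hd : (dF + M <= d)%N by lia.
have redE := causal_complement_degree_reducingE XnP sg hd.
have ccS S := causal_complement_sub_mul S cE.
have [S redS] := reduced_mod_sub_mul_exists M (sel l E0 E1) XnP.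
have uniqS S' : causal_complement ('X^dF * Ft0) ('X^dF * Ft1)
      (E0 - S' * Ft0) (E1 - S' * Ft1) a d /\
    degree_reducing ('X^dF * Ft0) ('X^dF * Ft1)
      (E0 - S' * Ft0) (E1 - S' * Ft1) M l -> S' = S.
  case=> cS' /(redE _ _ _ cS'); rewrite sel_sub_mul.
  exact: reduced_mod_sub_mul_inj XnP redS.
exists S; split=> //.
- by split=> //; apply/(redE _ _ _ (ccS S)); rewrite sel_sub_mul.
- move=> R0 R1 [cR rR].
  have [S' [eR0 eR1]] := causal_complement_param cop cE cR.
  by move: cR rR; rewrite eR0 eR1 => cR rR; rewrite (uniqS S' (conj cR rR)).
Qed.
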